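(* Let $\Gamma$ be a distance-regular graph with diameter $D\ge3$ and $a_1\ne0$. Let $\sigma_0,\dots,\sigma_D$ be a nontrivial pseudo cosine sequence which is tight, with auxiliary parameter $\varepsilon$, and write $\sigma=\sigma_1$. Then (i) $\sigma_2\ne1$; (ii) $\varepsilon\sigma\ne1$; (iii) $\sigma_2\ne\varepsilon\sigma$; (iv) $\sigma_2\ne\sigma^2$.
   Context: $\Gamma$ is a finite connected undirected graph without loops or multiple edges, distance-regular with diameter $D$, intersection numbers $a_i,b_i,c_i$ ($c_0=0$, $b_D=0$), valency $k$, $c_i+a_i+b_i=k$. For $\theta\in\mathbb{R}$ the pseudo cosine sequence for $\theta$ is the sequence of reals $\sigma_0,\dots,\sigma_D$ with $\sigma_0=1$ and $c_i\sigma_{i-1}+a_i\sigma_i+b_i\sigma_{i+1}=\theta\sigma_i$ for $0\le i\le D-1$; nontrivial means $\sigma_1\ne1$. Pseudo cosine sequences $\sigma_i$, $\rho_i$ form a tight pair if $(\sigma_i\rho_i)_{i=0}^D$ is a pseudo cosine sequence. For a tight pair of nontrivial pseudo cosine sequences, an auxiliary parameter is a real $\varepsilon$ with $\sigma_i\rho_i-\sigma_{i-1}\rho_{i-1}=\varepsilon(\sigma_{i-1}\rho_i-\sigma_i\rho_{i-1})$ for $1\le i\le D$. When $a_1\ne0$, a nontrivial pseudo cosine sequence $\sigma_0,\dots,\sigma_D$ is tight if some nontrivial pseudo cosine sequence $\rho_0,\dots,\rho_D$ forms a tight pair with it; its auxiliary parameter is the (uniquely determined) auxiliary parameter of that pair.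 *)

From HB Require Import structures.
From mathcomp Require Import all_boot all_order all_algebra.
From mathcomp Require Import reals.
Set Implicit Arguments. Unset Strict Implicit. Unset Printing Implicit Defensive.
Import Order.TTheory GRing.Theory Num.Theory.
Local Open Scope ring_scope.

Fixpoint within (T : finType) (e : rel T) (n : nat) (x : T) : {set T} :=
  match n with
  | 0 => [set x]
  | n'.+1 => within e n' x :|: [set y | [exists z in within e n' x, e z y]]
  end.

Definition layer (T : finType) (e : rel T) (i : nat) (x : T) : {set T} :=
  [set y | (y \in within e i x) && ((i == 0)%N || (y \notin within e i.-1 x))].

Definition is_drg (T : finType) (e : rel T) (D : nat) (a b c : nat -> nat) : Prop :=
  symmetric e /\ irreflexive e /\
  (forall x y : T, y \in within e D x) /\
  (exists x y : T, y \in layer e D x) /\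
  c 0%N = 0%N /\ b D = 0%N /\
  (forall (i : nat) (x y : T), (i <= D)%N -> y \in layer e i x ->
     [/\ #|[set z in layer e i.-1 x | e y z]| = c i,
         #|[set z in layer e i x | e y z]| = a i &
         #|[set z in layer e i.+1 x | e y z]| = b i]).

(* ---------- Pseudo cosine sequences (sequences indexed 0..D; values beyond D are irrelevant) *)

Definition pseudo_cosine_for (R : realType) (D : nat) (a b c : nat -> nat)
    (theta : R) (s : nat -> R) : Prop :=
  s 0%N = 1 /\
  forall i : nat, (i < D)%N ->
    (c i)%:R * s i.-1 + (a i)%:R * s i + (b i)%:R * s i.+1 = theta * s i.
(* for i = 0, c_0 = 0 so the value s (0.-1) = s 0 is irrelevant *)

Definition pseudo_cosine (R : realType) (D : nat) (a b c : nat -> nat) (s : nat -> R) : Prop :=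
  exists theta : R, pseudo_cosine_for D a b c theta s.

Definition nontrivial_pcs (R : realType) (D : nat) (a b c : nat -> nat) (s : nat -> R) : Prop :=
  pseudo_cosine D a b c s /\ s 1%N != 1.

Definition tight_pair (R : realType) (D : nat) (a b c : nat -> nat) (s r : nat -> R) : Prop :=
  pseudo_cosine D a b c s /\ pseudo_cosine D a b c r /\
  pseudo_cosine D a b c (fun i => s i * r i).

Definition auxiliary_parameter (R : realType) (D : nat) (s r : nat -> R) (eps : R) : Prop :=
  forall i : nat, (1 <= i <= D)%N ->
    s i * r i - s i.-1 * r i.-1 = eps * (s i.-1 * r i - s i * r i.-1).

Definition tight_with_aux (R : realType) (D : nat) (a b c : nat -> nat)
    (s : nat -> R) (eps : R) : Prop :=
  nontrivial_pcs D a b c s /\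
  exists r : nat -> R, nontrivial_pcs D a b c r /\ tight_pair D a b c s r /\
                       auxiliary_parameter D s r eps.

(* Only the recurrences at i <= 2 matter.  The one at i = 0 gives theta = k sigma_1,
   so a pseudo cosine sequence satisfies two polynomial relations in sigma_1, sigma_2,
   sigma_3 and the intersection numbers; for a tight pair sigma, rho they hold for sigma,
   rho and sigma rho, together with the auxiliary relations at i = 1, 2.  Elementary
   algebra turns each of the four equalities into a degenerate configuration:
   sigma_2 = 1 forces sigma_1 = 1 or rho_1 in {0, 1}; eps sigma_1 = 1 forces
   sigma_1 = eps = -1 and rho_1 = rho_2 = -1/k; sigma_2 = eps sigma_1 forces either
   eps = 1, the previous case with sigma and rho exchanged, or eps = -1 and sigma_2 = 1;
   and sigma_2 = sigma_1^2 forces sigma_1 = rho_1 = -1/(1 + a_1) with sigma_1^2 = 1.  The recurrences at i = 2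
   exclude rho_1 = 0 and the pair (sigma_1, rho_1) = (-1, -1/k), because a_2 > 0, which
   holds in any distance-regular graph with a_1 <> 0 and D >= 3. *)

From HB Require Import structures.
From mathcomp Require Import all_boot all_order all_algebra.
From mathcomp Require Import reals.
From mathcomp Require Import ring lra.
Import Order.TTheory GRing.Theory Num.Theory.
Set Implicit Arguments. Unset Strict Implicit. Unset Printing Implicit Defensive.

Section Layers.
Variables (T : finType) (e : rel T).

Lemma within0 x y : (y \in within e 0 x) = (y == x).
Proof. by rewrite inE. Qed.

Lemma withinS n x y :
  (y \in within e n.+1 x) = (y \in within e n x) || [exists z in within e n x, e z y].
Proof. by rewrite !inE. Qed.

Lemma within_step n x y z : y \in within e n x -> e y z -> z \in within e n.+1 x.
Proof.
by move=> y_in yz; rewrite withinS; apply/orP; right; apply/existsP; exists y; rewrite y_in.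
Qed.

Lemma within_mono m n x : (m <= n)%N -> {subset within e m x <= within e n x}.
Proof.
move=> /subnK <- y; elim: (n - m)%N => [//|d IHd] y_in.
by rewrite addSn withinS IHd.
Qed.

Lemma within_trans m n x y z :
  y \in within e m x -> z \in within e n y -> z \in within e (n + m) x.
Proof.
move=> y_in; elim: n z => [|n IHn] z; first by rewrite within0 => /eqP ->.
rewrite withinS => /orP [/IHn /(within_mono (leqnSn _))//|].
by case/existsP => w /andP [/IHn w_in wz]; apply: within_step w_in wz.
Qed.

Lemma layer0 x y : (y \in layer e 0 x) = (y == x).
Proof. by rewrite !inE andbT. Qed.

Lemma layerS i x y :
  (y \in layer e i.+1 x) = (y \in within e i.+1 x) && (y \notin within e i x).
Proof. by rewrite inE. Qed.

Lemma layer_within i x : {subset layer e i x <= within e i x}.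
Proof. by move=> y; rewrite inE => /andP []. Qed.

Lemma mem_layer_uniq i j x y : y \in layer e i x -> y \in layer e j x -> i = j.
Proof.
wlog ij : i j / (i < j)%N => [wlog_ij yi yj|].
  by case: (ltngtP i j) => [ij|ji|//]; [apply: wlog_ij | apply/esym/wlog_ij].
case: j ij => // j; rewrite ltnS => ij /layer_within yi; rewrite layerS => /andP [_].
by rewrite (within_mono ij yi).
Qed.

Lemma layer_pred i x y : y \in layer e i.+1 x -> exists2 z, z \in layer e i x & e z y.
Proof.
rewrite layerS withinS => /andP [/orP [y_in|]]; first by rewrite y_in.
case/existsP => z /andP [z_in zy] y_out; exists z => //.
case: i z_in zy y_out => [|i] z_in zy y_out; first by rewrite layer0 -within0.
by rewrite layerS z_in; apply: contra y_out => /within_step; apply.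
Qed.

Lemma layer_leq_nonempty i j x y :
  (j <= i)%N -> y \in layer e i x -> exists z, z \in layer e j x.
Proof.
elim: i y => [|i IHi] y; first by rewrite leqn0 => /eqP -> y_in; exists y.
rewrite leq_eqVlt => /orP [/eqP -> y_in|ji /layer_pred [z z_in _]]; first by exists y.
exact: IHi ji z_in.
Qed.

Hypotheses (e_sym : symmetric e) (e_irr : irreflexive e).

Lemma layer1E x y : (y \in layer e 1 x) = e x y.
Proof.
rewrite layerS withinS !within0; case: eqP => [->|_] /=; first by rewrite e_irr.
rewrite andbT; apply/existsP/idP => [[z /andP [/set1P -> //]]|xy].
by exists x; rewrite inE eqxx.
Qed.

Lemma adj_layer i x y z : y \in layer e i.+1 x -> e y z ->
  [|| z \in layer e i x, z \in layer e i.+1 x | z \in layer e i.+2 x].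
Proof.
move=> y_in yz; have z_in2 := within_step (layer_within y_in) yz.
case z_in1: (z \in within e i.+1 x); last by rewrite (layerS i.+1) z_in2 z_in1 !orbT.
case z_in0: (z \in within e i x); last by rewrite layerS z_in1 z_in0 orbT.
case: i y_in z_in2 z_in1 z_in0 => [|i] y_in _ _ z_in0; first by rewrite layer0 -within0 z_in0.
rewrite (layerS i) z_in0 /=; apply/orP; left; apply: contraL y_in => z_in.
have y_in1 : y \in within e i.+1 x by apply: within_step z_in _; rewrite e_sym.
by rewrite layerS y_in1 andbF.
Qed.

Lemma card_adj_layers i x y : y \in layer e i.+1 x ->
  #|[set z | e y z]| = (#|[set z in layer e i x | e y z]|
     + #|[set z in layer e i.+1 x | e y z]| + #|[set z in layer e i.+2 x | e y z]|)%N.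
Proof.
move=> y_in; rewrite !setIdE; set Ny := [set z | e y z].
have cap0 j l : j != l -> (layer e j x :&: Ny) :&: (layer e l x :&: Ny) = set0.
  move=> jl; apply/setP => z; rewrite !in_setI in_set0.
  apply/negP => /andP [/andP [zj _] /andP [zl _]].
  by move/eqP: jl; apply; apply: mem_layer_uniq zj zl.
have NyE : Ny =
    (layer e i x :&: Ny) :|: (layer e i.+1 x :&: Ny) :|: (layer e i.+2 x :&: Ny).
  rewrite -!setIUl; apply/esym/setIidPr/subsetP => z.
  by rewrite in_set => yz; rewrite !in_setU -orbA; apply: adj_layer yz.
rewrite {1}NyE cardsU setIUl !cap0 ?setU0 ?cards0 ?subn0 ?cardsU ?cap0 ?cards0 ?subn0 //.
all: by rewrite ltn_eqF.
Qed.

End Layers.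

Section DistanceRegular.
Variables (T : finType) (e : rel T) (D : nat) (a b c : nat -> nat).
Hypothesis drg : is_drg e D a b c.

Let e_sym : symmetric e. Proof. by case: drg. Qed.
Let e_irr : irreflexive e. Proof. by case: drg => _ []. Qed.

Let drg_count i x y : (i <= D)%N -> y \in layer e i x ->
  [/\ #|[set z in layer e i.-1 x | e y z]| = c i,
      #|[set z in layer e i x | e y z]| = a i
    & #|[set z in layer e i.+1 x | e y z]| = b i].
Proof. by case: drg => _ [_ [_ [_ [_ [_ ]]]]]; apply. Qed.

Let drg_layer_nonempty i : (i <= D)%N -> exists x y, y \in layer e i x.
Proof.
case: drg => _ [_ [_ [[x [y y_in]] _]]] iD.
by have [z z_in] := layer_leq_nonempty iD y_in; exists x, z.
Qed.

Lemma drg_degree y : #|[set z | e y z]| = b 0.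
Proof.
have y_in : y \in layer e 0 y by rewrite layer0.
have [_ _ <-] := drg_count (leq0n D) y_in.
have Ny_sub : [set z | e y z] \subset layer e 1 y.
  by apply/subsetP => z; rewrite in_set (layer1E e_irr).
by rewrite setIdE (setIidPr Ny_sub).
Qed.

Lemma drg_a0 : a 0 = 0%N.
Proof.
have [x [_ _]] := drg_layer_nonempty (leq0n D).
have x_in : x \in layer e 0 x by rewrite layer0.
have [_ <- _] := drg_count (leq0n D) x_in.
apply/eqP; rewrite cards_eq0; apply/eqP/setP => z.
rewrite in_set0 setIdE in_setI layer0 in_set.
by apply/negP => /andP [/eqP ->]; rewrite e_irr.
Qed.

Lemma drg_c1 : (1 <= D)%N -> c 1 = 1%N.
Proof.
move=> D1; have [x [y y_in]] := drg_layer_nonempty D1.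
have [<- _ _] := drg_count D1 y_in; rewrite -[RHS](cards1 x) setIdE.
apply: eq_card => z; rewrite in_setI layer0 in_set in_set1.
by case: eqP => // ->; rewrite e_sym -(layer1E e_irr).
Qed.

Lemma drg_valency i : (i < D)%N -> b 0 = (c i.+1 + a i.+1 + b i.+1)%N.
Proof.
move=> iD; have [x [y y_in]] := drg_layer_nonempty iD.
have [<- <- <-] := drg_count iD y_in.
by rewrite -(drg_degree y) (card_adj_layers e_sym y_in).
Qed.

Lemma drg_a2_gt0 : (3 <= D)%N -> a 1 != 0%N -> (0 < a 2)%N.
Proof.
(* An edge y2 y3 from layer 2 to layer 3 of x lies on a triangle y2 y3 w.  Either w is
   in layer 2 of x, or y3 and w are both in layer 2 of a neighbour y1 of y2 in layer 1. *)
move=> D3 a1_neq0; have D2 := ltnW D3; have D1 := ltnW D2.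
have [x [y3 y3_in]] := drg_layer_nonempty D3.
have [y2 y2_in e23] := layer_pred y3_in.
have [y1 y1_in e12] := layer_pred y2_in.
have [w /setIdP [w_in1 e3w]] : exists w, w \in [set z in layer e 1 y2 | e y3 z].
  have y3_in1 : y3 \in layer e 1 y2 by rewrite (layer1E e_irr).
  have [_ a1E _] := drg_count D1 y3_in1.
  by apply/set0Pn; rewrite -card_gt0 lt0n a1E.
have e2w : e y2 w by rewrite -(layer1E e_irr).
have y1_near : y1 \in within e 1 x := layer_within y1_in.
have y2_near : y2 \in within e 1 y1 by apply: layer_within; rewrite (layer1E e_irr).
have y3_out : y3 \notin within e 2 x by move: y3_in; rewrite layerS => /andP [].
case: (boolP (w \in within e 2 x)) => [w_near | w_out].
  have w_in : w \in layer e 2 x.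
    rewrite layerS w_near; apply: contra y3_out => /within_step; apply.
    by rewrite e_sym.
  have [_ <- _] := drg_count D2 y2_in.
  by apply/card_gt0P; exists w; apply/setIdP.
have in_layer2 z : e y2 z -> z \notin within e 2 x -> z \in layer e 2 y1.
  move=> e2z z_out; rewrite layerS (within_step y2_near e2z).
  by apply: contra z_out => /(within_trans y1_near).
have [_ <- _] := drg_count D2 (in_layer2 _ e23 y3_out).
by apply/card_gt0P; exists w; apply/setIdP; split; first exact: in_layer2.
Qed.

End DistanceRegular.

Local Open Scope ring_scope.

Section CosineRecurrence.
Variables (R : realFieldType) (k a1 b1 c2 a2 b2 : R).

(* The recurrences at i = 1, 2 of a pseudo cosine sequence with sigma_0 = 1, after
   substituting theta = k sigma_1 from the recurrence at i = 0; here k = b_0. *)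
Definition cosine_rec1 (s1 s2 : R) := 1 + a1 * s1 + b1 * s2 = k * s1 ^+ 2.
Definition cosine_rec2 (s1 s2 s3 : R) := c2 * s1 + a2 * s2 + b2 * s3 = k * s1 * s2.

Hypotheses (k_eq1 : k = 1 + a1 + b1) (k_eq2 : k = c2 + a2 + b2).
Hypotheses (a1_gt0 : 0 < a1) (b1_ge0 : 0 <= b1).
Hypotheses (c2_ge0 : 0 <= c2) (a2_gt0 : 0 < a2) (b2_ge0 : 0 <= b2).

Lemma cosine_rec1_subr1 s1 s2 :
  cosine_rec1 s1 s2 -> b1 * (s2 - 1) = (s1 - 1) * (k * (s1 + 1) - a1).
Proof. by move: k_eq1; rewrite /cosine_rec1; lra. Qed.

Lemma cosine_rec1_sigma2_eq1 s1 :
  s1 != 1 -> cosine_rec1 s1 1 -> k * (s1 + 1) = a1.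
Proof.
move=> s1_neq1 /cosine_rec1_subr1; rewrite subrr mulr0 => /esym/eqP.
by rewrite mulf_eq0 subr_eq0 (negbTE s1_neq1) subr_eq0 => /eqP.
Qed.

Lemma cosine_rec1_sigma2_eq_sigma1 s1 :
  s1 != 1 -> cosine_rec1 s1 s1 -> k * s1 = -1.
Proof.
move=> s1_neq1 rec; have /eqP : (s1 - 1) * (k * s1 + 1) = 0.
  by move: rec; rewrite /cosine_rec1 k_eq1; lra.
by rewrite mulf_eq0 subr_eq0 (negbTE s1_neq1) addr_eq0 => /eqP.
Qed.

Lemma cosine_rec1_sigma2_eq_sqr s1 :
  s1 != 1 -> cosine_rec1 s1 (s1 ^+ 2) -> (1 + a1) * s1 = -1.
Proof.
move=> s1_neq1 rec; have /eqP : (s1 - 1) * ((1 + a1) * s1 + 1) = 0.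
  by move: rec; rewrite /cosine_rec1 k_eq1; lra.
by rewrite mulf_eq0 subr_eq0 (negbTE s1_neq1) addr_eq0 => /eqP.
Qed.

Lemma cosine_rec1_N1 s2 : cosine_rec1 (-1) s2 -> 1 < s2.
Proof.
move=> /cosine_rec1_subr1; rewrite addNr mulr0 sub0r.
by move: a1_gt0 b1_ge0; nra.
Qed.

(* At i = 2 the product recurrence forces s2 (c2 + 2 a2) = c2, while s2 > 1 by the
   recurrence for sigma at i = 1. *)
Lemma cosine_rec_N1_pair s2 s3 r1 r3 :
  cosine_rec1 (-1) s2 -> cosine_rec2 (-1) s2 s3 ->
  k * r1 = -1 -> cosine_rec2 r1 r1 r3 -> ~ cosine_rec2 (- r1) (s2 * r1) (s3 * r3).
Proof.
move=> /cosine_rec1_N1 s2_gt1 sigma_rec2 kr1 rho_rec2 prod_rec2.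
have b2s3 : b2 * s3 = c2 - (a2 + k) * s2.
  by move: sigma_rec2; rewrite /cosine_rec2; lra.
have b2r3 : b2 * r3 = - r1 * (1 + c2 + a2).
  by move: rho_rec2; rewrite /cosine_rec2 kr1; lra.
have prod_rec2_b2 : b2 * (c2 * - r1 + a2 * (s2 * r1) - s2 * r1) + b2 * s3 * (b2 * r3) = 0.
  move: prod_rec2; rewrite /cosine_rec2 [k * - r1]mulrN kr1 opprK mul1r.
  by move/(congr1 (fun x => b2 * (x - s2 * r1))); rewrite subrr mulr0 => <-; ring.
have : r1 * ((k + 1) * (s2 * (c2 + 2 * a2) - c2)) = 0.
  by rewrite -prod_rec2_b2 b2s3 b2r3 k_eq2; ring.
have r1_neq0 : r1 != 0 by apply/eqP => r1_0; move: kr1; rewrite r1_0 mulr0; lra.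
have k1_neq0 : k + 1 != 0 by apply: lt0r_neq0; move: a1_gt0 b1_ge0; rewrite k_eq1; lra.
move/eqP; rewrite !mulf_eq0 (negbTE r1_neq0) (negbTE k1_neq0) subr_eq0 /= => /eqP.
by move: s2_gt1 c2_ge0 a2_gt0; nra.
Qed.

Section TightPair.
Variables (s1 s2 s3 r1 r2 r3 eps : R).
Hypotheses (sigma_rec1 : cosine_rec1 s1 s2) (sigma_rec2 : cosine_rec2 s1 s2 s3).
Hypotheses (rho_rec1 : cosine_rec1 r1 r2) (rho_rec2 : cosine_rec2 r1 r2 r3).
Hypotheses (prod_rec1 : cosine_rec1 (s1 * r1) (s2 * r2)).
Hypotheses (prod_rec2 : cosine_rec2 (s1 * r1) (s2 * r2) (s3 * r3)).
Hypotheses (aux1 : s1 * r1 - 1 = eps * (r1 - s1)).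
Hypotheses (aux2 : s2 * r2 - s1 * r1 = eps * (s1 * r2 - s2 * r1)).
Hypotheses (s1_neq1 : s1 != 1) (r1_neq1 : r1 != 1).

Lemma tight_rho1_neq0 : r1 != 0.
Proof.
(* If rho_1 = 0, then rho and sigma rho start alike, so the recurrences give sigma_2 = 1,
   then sigma_3 = 1, and finally sigma_1 = 1. *)
apply/eqP => r1_0.
have b1r2 : b1 * r2 = -1.
  by move: rho_rec1; rewrite /cosine_rec1 r1_0 mulr0 expr0n mulr0; lra.
have s2_1 : s2 = 1.
  move: prod_rec1; rewrite /cosine_rec1 r1_0 mulr0 mulr0 expr0n mulr0 mulrCA b1r2.
  lra.
have r2_neq0 : r2 != 0 by apply/eqP => r2_0; move: b1r2; rewrite r2_0 mulr0; lra.
have s3_1 : s3 = 1.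
  have : a2 * r2 * (s3 - 1) = 0.
    have rho_rec2_0 : a2 * r2 + b2 * r3 = 0.
      by move: rho_rec2; rewrite /cosine_rec2 r1_0 !mulr0 mul0r add0r.
    have prod_rec2_0 : a2 * r2 + b2 * (s3 * r3) = 0.
      by move: prod_rec2; rewrite /cosine_rec2 r1_0 s2_1 !mulr0 !mul0r add0r mul1r.
    have -> : a2 * r2 * (s3 - 1) = s3 * (a2 * r2 + b2 * r3) - (a2 * r2 + b2 * (s3 * r3)).
      by ring.
    by rewrite rho_rec2_0 prod_rec2_0 mulr0 subrr.
  move/eqP; rewrite !mulf_eq0 (gt_eqF a2_gt0) (negbTE r2_neq0) subr_eq0 /=.
  by move/eqP.
have : (a2 + b2) * (s1 - 1) = 0.
  by move: sigma_rec2; rewrite /cosine_rec2 s2_1 s3_1 k_eq2; lra.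
apply/eqP; rewrite mulf_eq0 subr_eq0 (negbTE s1_neq1) orbF.
by apply: lt0r_neq0; move: a2_gt0 b2_ge0; lra.
Qed.

Lemma tight_sigma2_neq1 : s2 != 1.
Proof.
apply/eqP => s2_1.
have ks1 : k * (s1 + 1) = a1.
  by apply: cosine_rec1_sigma2_eq1 => //; rewrite -s2_1.
have : a1 * r1 * (s1 - 1) = r1 ^+ 2 * (s1 - 1) * (k * (s1 + 1)).
  by move: prod_rec1 rho_rec1; rewrite /cosine_rec1 s2_1; lra.
rewrite ks1 => /eqP; rewrite -subr_eq0.
have -> : a1 * r1 * (s1 - 1) - r1 ^+ 2 * (s1 - 1) * a1 = a1 * r1 * (s1 - 1) * (1 - r1).
  by ring.
rewrite !mulf_eq0 (gt_eqF a1_gt0) (negbTE tight_rho1_neq0) !subr_eq0.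
by rewrite (negbTE s1_neq1) eq_sym (negbTE r1_neq1).
Qed.

Lemma tight_eps_sigma1_neq1 : eps * s1 != 1.
Proof.
apply/eqP => eps_s1.
have s1_eps : s1 = eps.
  have /eqP : r1 * (s1 - eps) = 0 by move: aux1 eps_s1; lra.
  by rewrite mulf_eq0 (negbTE tight_rho1_neq0) subr_eq0 => /eqP.
have s1_N1 : s1 = -1.
  have /eqP : s1 ^+ 2 = 1 by rewrite expr2 {1}s1_eps.
  by rewrite sqrf_eq1 (negbTE s1_neq1) => /eqP.
have r2_r1 : r2 = r1.
  have b1s2 : b1 * (s2 - 1) = 2 * a1.
    by rewrite (cosine_rec1_subr1 sigma_rec1) s1_N1; ring.
  have : b1 * (s2 - 1) * r2 = 2 * a1 * r1.
    by move: prod_rec1 rho_rec1; rewrite /cosine_rec1 s1_N1; lra.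
  rewrite b1s2 => /eqP; rewrite -subr_eq0 -mulrBr mulf_eq0 subr_eq0.
  by rewrite mulf_eq0 (gt_eqF a1_gt0) pnatr_eq0 /= => /eqP.
have kr1 : k * r1 = -1.
  by apply: cosine_rec1_sigma2_eq_sigma1 => //; rewrite -{2}r2_r1.
apply: (cosine_rec_N1_pair (s2 := s2) (s3 := s3) (r3 := r3) _ _ kr1).
- by rewrite -s1_N1.
- by rewrite -s1_N1.
- by move: rho_rec2; rewrite r2_r1.
- by move: prod_rec2; rewrite s1_N1 r2_r1 mulN1r.
Qed.

Lemma tight_sigma2_neq_eps_sigma1 : s2 != eps * s1.
Proof.
apply/eqP => s2_eps.
have s1_neq0 : s1 != 0.
  by apply/eqP => s0; move: sigma_rec1; rewrite /cosine_rec1 s2_eps s0; lra.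
have /eqP : s1 * r1 * (eps ^+ 2 - 1) = 0 by move: aux2; rewrite s2_eps; lra.
rewrite !mulf_eq0 (negbTE s1_neq0) (negbTE tight_rho1_neq0) subr_eq0 sqrf_eq1 /=.
case/orP => /eqP eps_pm1.
- have s2_s1 : s2 = s1 by rewrite s2_eps eps_pm1 mul1r.
  have r1_N1 : r1 = -1.
    have /eqP : (s1 - 1) * (r1 + 1) = 0 by move: aux1; rewrite eps_pm1; lra.
    by rewrite mulf_eq0 subr_eq0 (negbTE s1_neq1) addr_eq0 => /eqP.
  have ks1 : k * s1 = -1.
    by apply: cosine_rec1_sigma2_eq_sigma1 => //; rewrite -{2}s2_s1.
  apply: (cosine_rec_N1_pair (s2 := r2) (s3 := r3) (r3 := s3) _ _ ks1).
  + by rewrite -r1_N1.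
  + by rewrite -r1_N1.
  + by move: sigma_rec2; rewrite s2_s1.
  + by move: prod_rec2; rewrite r1_N1 s2_s1 mulrN1 mulrC [s3 * _]mulrC.
- have s1_N1 : s1 = -1.
    have /eqP : (s1 + 1) * (r1 - 1) = 0 by move: aux1; rewrite eps_pm1; lra.
    by rewrite mulf_eq0 subr_eq0 (negbTE r1_neq1) orbF addr_eq0 => /eqP.
  by move/eqP: tight_sigma2_neq1; apply; rewrite s2_eps eps_pm1 s1_N1 mulrNN mul1r.
Qed.

Lemma tight_sigma2_neq_sqr : s2 != s1 ^+ 2.
Proof.
apply/eqP => s2_sqr.
have a1s1 : (1 + a1) * s1 = -1.
  by apply: cosine_rec1_sigma2_eq_sqr => //; rewrite -s2_sqr.
have s1_sqr_lt1 : s1 ^+ 2 < 1 by move: a1_gt0 a1s1; nra.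
have s1_neq0 : s1 != 0 by apply/eqP => s0; move: a1s1; rewrite s0 mulr0; lra.
have s1_neq_eps : s1 != eps.
  by apply/eqP => s1_eps; move: aux1 s1_sqr_lt1; rewrite -s1_eps; lra.
have r2_sqr : r2 = r1 ^+ 2.
  have /eqP : s1 * ((r2 - r1 ^+ 2) * (s1 - eps)) = 0.
    have -> : s1 * ((r2 - r1 ^+ 2) * (s1 - eps)) =
      (s2 * r2 - s1 * r1 - eps * (s1 * r2 - s2 * r1))
      - s1 * r1 * (s1 * r1 - 1 - eps * (r1 - s1)).
      by rewrite s2_sqr; ring.
    by rewrite aux1 aux2 !subrr mulr0 subr0.
  rewrite !mulf_eq0 (negbTE s1_neq0) !subr_eq0 (negbTE s1_neq_eps) orbF /=.
  by move/eqP.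
have a1r1 : (1 + a1) * r1 = -1.
  by apply: cosine_rec1_sigma2_eq_sqr => //; rewrite -r2_sqr.
have r1_s1 : r1 = s1.
  have /eqP : (1 + a1) * (r1 - s1) = 0 by rewrite mulrBr a1r1 a1s1 subrr.
  by rewrite mulf_eq0 subr_eq0 => /orP [/eqP|/eqP]; [move: a1_gt0; lra|].
by move: aux1 s1_sqr_lt1; rewrite r1_s1 subrr mulr0; lra.
Qed.

Lemma tight_pair_sigma2 :
  [/\ s2 != 1, eps * s1 != 1, s2 != eps * s1 & s2 != s1 ^+ 2].
Proof.
split; [exact: tight_sigma2_neq1 | exact: tight_eps_sigma1_neq1 |
        exact: tight_sigma2_neq_eps_sigma1 | exact: tight_sigma2_neq_sqr].
Qed.

End TightPair.
End CosineRecurrence.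

Lemma pseudo_cosine_head (R : realType) D (a b c : nat -> nat) (s : nat -> R) :
  (3 <= D)%N -> c 0%N = 0%N -> a 0%N = 0%N -> c 1%N = 1%N ->
  pseudo_cosine D a b c s ->
  [/\ s 0%N = 1, cosine_rec1 (b 0%N)%:R (a 1%N)%:R (b 1%N)%:R (s 1%N) (s 2%N)
    & cosine_rec2 (b 0%N)%:R (c 2%N)%:R (a 2%N)%:R (b 2%N)%:R (s 1%N) (s 2%N) (s 3%N)].
Proof.
move=> D3 c0 a0 c1 [theta [s0 rec]].
have theta_E : theta = (b 0%N)%:R * s 1%N.
  by move: (rec 0%N (ltnW (ltnW D3))); rewrite c0 a0 s0 !mul0r !add0r mulr1.
split=> //; last by rewrite /cosine_rec2 (rec 2%N D3) theta_E.
by move: (rec 1%N (ltnW D3)); rewrite c1 s0 mulr1 theta_E -mulrA -expr2.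
Qed.

Theorem lemma12p4 (R : realType) (T : finType) (e : rel T) (D : nat)
    (a b c : nat -> nat) (sigma : nat -> R) (eps : R) :
  is_drg e D a b c -> (3 <= D)%N -> a 1%N != 0%N ->
  tight_with_aux D a b c sigma eps ->
  [/\ sigma 2%N != 1, eps * sigma 1%N != 1, sigma 2%N != eps * sigma 1%N
    & sigma 2%N != sigma 1%N ^+ 2].
Proof.
move=> drg D3 a1_neq0 [[s_pcs s1_neq1] [r [[r_pcs r1_neq1] [[_ [_ sr_pcs]] aux]]]].
have D2 : (2 <= D)%N := ltnW D3; have D1 : (1 <= D)%N := ltnW D2.
have c0 : c 0%N = 0%N by case: drg => _ [_ [_ [_ []]]].
have [a0 c1] := (drg_a0 drg, drg_c1 drg D1).
have [s0 s_rec1 s_rec2] := pseudo_cosine_head D3 c0 a0 c1 s_pcs.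
have [r0 r_rec1 r_rec2] := pseudo_cosine_head D3 c0 a0 c1 r_pcs.
have [_ sr_rec1 sr_rec2] := pseudo_cosine_head D3 c0 a0 c1 sr_pcs.
have aux1 := aux 1%N D1; rewrite s0 r0 !mul1r !mulr1 in aux1.
have aux2 := aux 2%N D2.
have k_eq1 : (b 0%N)%:R = 1 + (a 1%N)%:R + (b 1%N)%:R :> R.
  by rewrite (drg_valency drg D1) c1 !natrD.
have k_eq2 : (b 0%N)%:R = (c 2%N)%:R + (a 2%N)%:R + (b 2%N)%:R :> R.
  by rewrite (drg_valency drg D2) !natrD.
have a1_gt0 : 0 < (a 1%N)%:R :> R by rewrite ltr0n lt0n.
have a2_gt0 : 0 < (a 2%N)%:R :> R by rewrite ltr0n (drg_a2_gt0 drg).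
exact: (tight_pair_sigma2 k_eq1 k_eq2 a1_gt0 (ler0n _ _) (ler0n _ _) a2_gt0 (ler0n _ _)
          s_rec1 s_rec2 r_rec1 r_rec2 sr_rec1 sr_rec2 aux1 aux2 s1_neq1 r1_neq1).
Qed.
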